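(* Let $X$ be a real Banach space and $T:X\rightrightarrows X^*$ a monotone operator whose range $R_T$ is bounded. Consider the conditions: (i) for every $x^*\notin\overline{R_T}$, $\sup\left\{\frac{\langle x^*-z^*,z\rangle}{\|x^*-z^*\|}:(z,z^* )\in G(T)\right\}=\infty$; (ii) $\pi_2\,\mathrm{dom}\,\varphi_T\subset\overline{R_T}$; (iii) $\overline{R_T}=\overline{\mathrm{co}\,R_T}=\overline{\pi_2\,\mathrm{dom}\,\varphi_T}$; (iv) $\overline{R_T}$ is convex; (i$'$) for every $x^*\notin\overline{R_T}^{w^*}$, $\sup\left\{\frac{\langle x^*-z^*,z\rangle}{\|x^*-z^*\|}:(z,z^* )\in G(T)\right\}=\infty$; (ii$'$) $\pi_2\,\mathrm{dom}\,\varphi_T\subset\overline{R_T}^{w^*}$; (iii$'$) $\overline{R_T}^{w^*}=\overline{\mathrm{co}\,R_T}^{w^*}=\overline{\pi_2\,\mathrm{dom}\,\varphi_T}^{w^*}$; (iv$'$) $\overline{R_T}^{w^*}$ is convex. Then (i), (ii), (iii) are equivalent; (iii) $\Rightarrow$ (iv) $\Rightarrow$ (iv$'$); (i) $\Rightarrow$ (i$'$); (ii) $\Rightarrow$ (ii$'$) $\Rightarrow$ (iii$'$) $\Rightarrow$ (i$'$); and (iii$'$) $\Rightarrow$ (iv$'$). If moreover $T$ is maximal monotone, then (iv$'$) $\Rightarrow$ (i$'$).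
   Context: $X$ is a real Banach space with topological dual $X^*$ and pairing $\langle x,x^*\rangle$. A (multivalued) operator $T:X\rightrightarrows X^*$ has graph $G(T)=\{(x,x^* ):x^*\in T(x)\}$, domain $D_T=\{x:T(x)\neq\emptyset\}$ and range $R_T=\bigcup_{x}T(x)$. $T$ is monotone if $\langle x^*-y^*,x-y\rangle\ge0$ for all $(x,x^* ),(y,y^* )\in G(T)$; it is maximal monotone if no monotone operator has a graph strictly containing $G(T)$. The Fitzpatrick function of a monotone $T$ is $\varphi_T(x,x^* )=\sup\{\langle x^*-z^*,z-x\rangle:(z,z^* )\in G(T)\}+\langle x^*,x\rangle$, $\mathrm{dom}\,\varphi_T=\{(x,x^* ):\varphi_T(x,x^* )<\infty\}$, and $\pi_2:X\times X^*\to X^*$ is the projection. $\mathrm{co}$ denotes convex hull, bars denote norm closure, and $\overline{A}^{w^*}$ denotes weak$^*$ closure in $X^*$. *)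

From Stdlib Require Import Reals Lra List ClassicalEpsilon.
Open Scope R_scope.

Record Banach := {
  carrier :> Type;
  vzero : carrier;
  vadd : carrier -> carrier -> carrier;
  vopp : carrier -> carrier;
  vscal : R -> carrier -> carrier;
  vnorm : carrier -> R;
  vadd_assoc : forall x y z, vadd x (vadd y z) = vadd (vadd x y) z;
  vadd_comm : forall x y, vadd x y = vadd y x;
  vadd_0 : forall x, vadd x vzero = x;
  vadd_opp : forall x, vadd x (vopp x) = vzero;
  vscal_1 : forall x, vscal 1 x = x;
  vscal_assoc : forall a b x, vscal a (vscal b x) = vscal (a * b) x;
  vscal_distr_v : forall a x y, vscal a (vadd x y) = vadd (vscal a x) (vscal a y);
  vscal_distr_s : forall a b x, vscal (a + b) x = vadd (vscal a x) (vscal b x);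
  vnorm_nonneg : forall x, 0 <= vnorm x;
  vnorm_eq0 : forall x, vnorm x = 0 -> x = vzero;
  vnorm_scal : forall a x, vnorm (vscal a x) = Rabs a * vnorm x;
  vnorm_triangle : forall x y, vnorm (vadd x y) <= vnorm x + vnorm y;
  complete : forall u : nat -> carrier,
    (forall eps, eps > 0 -> exists N, forall m n, (m >= N)%nat -> (n >= N)%nat ->
        vnorm (vadd (u m) (vopp (u n))) < eps) ->
    exists l, forall eps, eps > 0 -> exists N, forall n, (n >= N)%nat ->
        vnorm (vadd (u n) (vopp l)) < eps
}.

Definition vsub (X : Banach) (x y : X) : X := vadd X x (vopp X y).

(** Elements of the topological dual X^* are represented as functions X -> R
    satisfying [is_dual]; the pairing <x, x^*> is application [f x]. *)
Definition is_dual (X : Banach) (f : X -> R) : Prop :=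
  (forall x y, f (vadd X x y) = f x + f y) /\
  (forall a x, f (vscal X a x) = a * f x) /\
  (exists C, forall x, Rabs (f x) <= C * vnorm X x).

Definition dsub (X : Banach) (f g : X -> R) : X -> R := fun x => f x - g x.

Definition dnorm (X : Banach) (f : X -> R) : R :=
  epsilon (inhabits 0)
    (fun r => is_lub (fun y => exists x : X, vnorm X x <= 1 /\ y = Rabs (f x)) r).

(** A (multivalued) operator T : X =>> X^*, given by its graph. *)
Definition operator (X : Banach) (T : X -> (X -> R) -> Prop) : Prop :=
  forall x f, T x f -> is_dual X f.

Definition monotone (X : Banach) (T : X -> (X -> R) -> Prop) : Prop :=
  forall x f y g, T x f -> T y g -> 0 <= f (vsub X x y) - g (vsub X x y).

Definition maximal_monotone (X : Banach) (T : X -> (X -> R) -> Prop) : Prop :=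
  monotone X T /\
  forall S : X -> (X -> R) -> Prop, operator X S -> monotone X S ->
    (forall x f, T x f -> S x f) -> forall x f, S x f -> T x f.

Definition range (X : Banach) (T : X -> (X -> R) -> Prop) : (X -> R) -> Prop :=
  fun f => exists x, T x f.

Definition bounded_set (X : Banach) (A : (X -> R) -> Prop) : Prop :=
  exists C, forall f, A f -> dnorm X f <= C.

(** Fitzpatrick function domain: phi_T(x, xs) < +oo. *)
Definition dom_fitz (X : Banach) (T : X -> (X -> R) -> Prop) (x : X) (f : X -> R) : Prop :=
  is_dual X f /\
  exists M, forall z g, T z g -> (f (vsub X z x) - g (vsub X z x)) + f x <= M.

Definition pi2_dom_fitz (X : Banach) (T : X -> (X -> R) -> Prop) : (X -> R) -> Prop :=
  fun f => exists x, dom_fitz X T x f.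

Definition ncl (X : Banach) (A : (X -> R) -> Prop) : (X -> R) -> Prop :=
  fun f => is_dual X f /\
    forall eps, eps > 0 -> exists g, A g /\ dnorm X (dsub X f g) < eps.

(** Weak* closure in X^* (basic weak* neighbourhoods: finitely many points). *)
Definition wcl (X : Banach) (A : (X -> R) -> Prop) : (X -> R) -> Prop :=
  fun f => is_dual X f /\
    forall (l : list X) eps, eps > 0 ->
      exists g, A g /\ Forall (fun x => Rabs (f x - g x) < eps) l.

Fixpoint rsum (n : nat) (u : nat -> R) : R :=
  match n with O => 0 | S k => rsum k u + u k end.

Definition co (X : Banach) (A : (X -> R) -> Prop) : (X -> R) -> Prop :=
  fun f => exists (n : nat) (lam : nat -> R) (a : nat -> (X -> R)),
    (forall i, (i < n)%nat -> 0 <= lam i /\ A (a i)) /\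
    rsum n lam = 1 /\
    forall x, f x = rsum n (fun i => lam i * a i x).

Definition convex (X : Banach) (C : (X -> R) -> Prop) : Prop :=
  forall f g t, C f -> C g -> 0 <= t <= 1 -> C (fun x => t * f x + (1 - t) * g x).

Definition set_eq (X : Banach) (A B : (X -> R) -> Prop) : Prop :=
  forall f, A f <-> B f.

Definition subset (X : Banach) (A B : (X -> R) -> Prop) : Prop :=
  forall f, A f -> B f.

Definition sup_ratio_infinite (X : Banach) (T : X -> (X -> R) -> Prop) (f : X -> R) : Prop :=
  forall M, exists z g, T z g /\ (f z - g z) / dnorm X (dsub X f g) > M.

Definition cond_i X T := forall f, is_dual X f -> ~ ncl X (range X T) f ->
  sup_ratio_infinite X T f.
Definition cond_ii X T := subset X (pi2_dom_fitz X T) (ncl X (range X T)).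
Definition cond_iii X T :=
  set_eq X (ncl X (range X T)) (ncl X (co X (range X T))) /\
  set_eq X (ncl X (co X (range X T))) (ncl X (pi2_dom_fitz X T)).
Definition cond_iv X T := convex X (ncl X (range X T)).
Definition cond_i' X T := forall f, is_dual X f -> ~ wcl X (range X T) f ->
  sup_ratio_infinite X T f.
Definition cond_ii' X T := subset X (pi2_dom_fitz X T) (wcl X (range X T)).
Definition cond_iii' X T :=
  set_eq X (wcl X (range X T)) (wcl X (co X (range X T))) /\
  set_eq X (wcl X (co X (range X T))) (wcl X (pi2_dom_fitz X T)).
Definition cond_iv' X T := convex X (wcl X (range X T)).

(** The proof rests on a
    characterisation of [π₂ dom φ_T]: a functional [f] lies in it iff its pairing
    [<f - g, z>] is bounded above on the graph of [T] ([pi2_dom_fitz_iff]).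
    - Monotonicity makes the pairing of every [a ∈ R_T], hence of every convex
      combination, bounded: [R_T ⊂ co R_T ⊂ π₂ dom φ_T].
    - The ratio in (i) is unbounded at [f] outside a set [S ⊇ π₂ dom φ_T], since a
      bounded ratio bounds the pairing; conversely a bounded pairing plus a positive
      norm distance to [R_T] bounds the ratio.  This gives (i) ⟺ (ii), (iii') ⟹ (i').
    - For a closure operation, [π₂ dom φ_T ⊂ cl R_T] is equivalent to the closures of
      the three nested sets agreeing; with the norm and weak-star closures, and the
      convexity of [co R_T], this yields the remaining formal implications.
    - For maximal monotone [T], (iv') ⟹ (i') uses a weak-star separation of [f] from
      [R_T], obtained from a near-nearest point in finitely many coordinates, and
      maximality to put [f] in the range. *)
From Stdlib Require Import Reals Lra Lia List ClassicalEpsilon Classical FunctionalExtensionality.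
Open Scope R_scope.

Section DualSpace.

Variable X : Banach.

Lemma vadd_idem (a : X) : vadd X a a = a -> a = vzero X.
Proof.
  intro H.
  assert (E : vadd X (vadd X a a) (vopp X a) = vadd X a (vopp X a)) by (rewrite H; reflexivity).
  rewrite <- vadd_assoc, vadd_opp, vadd_0 in E. exact E.
Qed.

Lemma vscal_0 (x : X) : vscal X 0 x = vzero X.
Proof. apply vadd_idem. rewrite <- vscal_distr_s. f_equal; ring. Qed.

Lemma vnorm_0 : vnorm X (vzero X) = 0.
Proof. rewrite <- (vscal_0 (vzero X)), vnorm_scal, Rabs_R0; ring. Qed.

Lemma dual_add f x y : is_dual X f -> f (vadd X x y) = f x + f y.
Proof. intros [H _]. apply H. Qed.

Lemma dual_scal f a x : is_dual X f -> f (vscal X a x) = a * f x.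
Proof. intros [_ [H _]]. apply H. Qed.

Lemma dual_0 f : is_dual X f -> f (vzero X) = 0.
Proof. intro H. rewrite <- (vscal_0 (vzero X)), (dual_scal f 0 _ H). ring. Qed.

Lemma dual_sub f x y : is_dual X f -> f (vsub X x y) = f x - f y.
Proof.
  intro H. assert (E := dual_add f y (vopp X y) H).
  rewrite vadd_opp, dual_0 in E by exact H.
  unfold vsub. rewrite dual_add by exact H. lra.
Qed.

Lemma dual_lin f g a b : is_dual X f -> is_dual X g ->
  is_dual X (fun x => a * f x + b * g x).
Proof.
  intros Hf Hg. split; [|split].
  - intros x y. rewrite !dual_add by assumption. ring.
  - intros c x. rewrite !dual_scal by assumption. ring.
  - destruct Hf as [_ [_ [C1 H1]]]. destruct Hg as [_ [_ [C2 H2]]].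
    exists (Rabs a * C1 + Rabs b * C2). intro x.
    eapply Rle_trans; [apply Rabs_triang|]. rewrite !Rabs_mult.
    specialize (H1 x). specialize (H2 x).
    pose proof (Rabs_pos a). pose proof (Rabs_pos b). nra.
Qed.

Lemma dual_dsub f g : is_dual X f -> is_dual X g -> is_dual X (dsub X f g).
Proof.
  intros Hf Hg.
  replace (dsub X f g) with (fun x => 1 * f x + -1 * g x)
    by (apply functional_extensionality; intro; unfold dsub; ring).
  now apply dual_lin.
Qed.

Lemma dnorm_lub f : is_dual X f ->
  is_lub (fun y => exists x : X, vnorm X x <= 1 /\ y = Rabs (f x)) (dnorm X f).
Proof.
  intros Hf. unfold dnorm. apply epsilon_spec.
  destruct Hf as [_ [_ [C HC]]].
  destruct (completeness (fun y => exists x : X, vnorm X x <= 1 /\ y = Rabs (f x)))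
    as [m Hm]; [| |now exists m].
  - exists (Rabs C). intros y [x [Hx ->]]. specialize (HC x).
    pose proof (RRle_abs C). pose proof (vnorm_nonneg X x). pose proof (Rabs_pos C).
    assert (C * vnorm X x <= Rabs C) by (destruct (Rle_dec 0 C); nra). lra.
  - exists (Rabs (f (vzero X))), (vzero X). rewrite vnorm_0. split; [lra|reflexivity].
Qed.

Lemma dnorm_nonneg f : is_dual X f -> 0 <= dnorm X f.
Proof.
  intro Hf. destruct (dnorm_lub f Hf) as [Hub _].
  apply Rle_trans with (Rabs (f (vzero X))); [apply Rabs_pos|].
  apply Hub. exists (vzero X). rewrite vnorm_0. split; [lra|reflexivity].
Qed.

Lemma dnorm_bound f x : is_dual X f -> Rabs (f x) <= dnorm X f * vnorm X x.
Proof.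
  intro Hf. destruct (dnorm_lub f Hf) as [Hub _].
  destruct (Req_dec (vnorm X x) 0) as [E|E].
  - apply vnorm_eq0 in E. subst x. rewrite dual_0, Rabs_R0, vnorm_0 by exact Hf. lra.
  - assert (Hp : 0 < vnorm X x) by (pose proof (vnorm_nonneg X x); lra).
    assert (Hi : 0 < / vnorm X x) by (apply Rinv_0_lt_compat; lra).
    assert (Hy : Rabs (f (vscal X (/ vnorm X x) x)) <= dnorm X f).
    { apply Hub. eexists. split; [|reflexivity].
      rewrite vnorm_scal, Rabs_right, Rinv_l; lra. }
    rewrite dual_scal, Rabs_mult, Rabs_right in Hy by (exact Hf || lra).
    apply Rmult_le_compat_l with (r := vnorm X x) in Hy; [|lra].
    rewrite <- Rmult_assoc, Rinv_r, Rmult_1_l in Hy by lra. lra.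
Qed.

Lemma dnorm_le f K : is_dual X f -> 0 <= K ->
  (forall x, Rabs (f x) <= K * vnorm X x) -> dnorm X f <= K.
Proof.
  intros Hf HK H. destruct (dnorm_lub f Hf) as [_ Hleast]. apply Hleast.
  intros y [x [Hx ->]]. specialize (H x). nra.
Qed.

Lemma dnorm_zero f x : is_dual X f -> dnorm X f = 0 -> f x = 0.
Proof.
  intros Hf H. assert (B := dnorm_bound f x Hf). rewrite H, Rmult_0_l in B.
  destruct (Req_dec (f x) 0) as [|Hne]; auto.
  pose proof (Rabs_pos_lt _ Hne). lra.
Qed.

Lemma dnorm_triang f g h : is_dual X f -> is_dual X g -> is_dual X h ->
  dnorm X (dsub X f h) <= dnorm X (dsub X f g) + dnorm X (dsub X g h).
Proof.
  intros Hf Hg Hh.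
  assert (D1 := dual_dsub f g Hf Hg). assert (D2 := dual_dsub g h Hg Hh).
  pose proof (dnorm_nonneg _ D1). pose proof (dnorm_nonneg _ D2).
  apply dnorm_le; [now apply dual_dsub | lra |]. intro x.
  assert (B1 := dnorm_bound _ x D1). assert (B2 := dnorm_bound _ x D2).
  unfold dsub in *. replace (f x - h x) with ((f x - g x) + (g x - h x)) by ring.
  eapply Rle_trans; [apply Rabs_triang | lra].
Qed.

Lemma dnorm_sub_le f g : is_dual X f -> is_dual X g ->
  dnorm X (dsub X f g) <= dnorm X f + dnorm X g.
Proof.
  intros Hf Hg. pose proof (dnorm_nonneg f Hf). pose proof (dnorm_nonneg g Hg).
  apply dnorm_le; [now apply dual_dsub | lra |]. intro x.
  pose proof (dnorm_bound f x Hf). pose proof (dnorm_bound g x Hg). unfold dsub.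
  unfold Rminus. eapply Rle_trans; [apply Rabs_triang|]. rewrite Rabs_Ropp. lra.
Qed.

End DualSpace.

Lemma rsum_ext n u v : (forall i, (i < n)%nat -> u i = v i) -> rsum n u = rsum n v.
Proof. induction n; simpl; intros H; auto. rewrite IHn, H; auto. Qed.

Lemma rsum_le n u v : (forall i, (i < n)%nat -> u i <= v i) -> rsum n u <= rsum n v.
Proof.
  induction n; simpl; intros H; [lra|].
  assert (u n <= v n) by auto. assert (rsum n u <= rsum n v) by auto. lra.
Qed.

Lemma rsum_abs n u v : (forall i, (i < n)%nat -> Rabs (u i) <= v i) -> Rabs (rsum n u) <= rsum n v.
Proof.
  induction n; simpl; intros H; [rewrite Rabs_R0; lra|].
  assert (Rabs (u n) <= v n) by auto. assert (Rabs (rsum n u) <= rsum n v) by auto.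
  eapply Rle_trans; [apply Rabs_triang | lra].
Qed.

Lemma rsum_add n u v : rsum n (fun i => u i + v i) = rsum n u + rsum n v.
Proof. induction n; simpl; [ring | rewrite IHn; ring]. Qed.

Lemma rsum_scal n c u : rsum n (fun i => c * u i) = c * rsum n u.
Proof. induction n; simpl; [ring | rewrite IHn; ring]. Qed.

Lemma rsum_app n1 n2 u : rsum (n1 + n2) u = rsum n1 u + rsum n2 (fun i => u (n1 + i)%nat).
Proof. induction n2; simpl; [rewrite Nat.add_0_r; ring|]. rewrite Nat.add_succ_r. simpl. rewrite IHn2; ring. Qed.

Definition lsum {A : Type} (l : list A) (F : A -> R) : R :=
  fold_right (fun x acc => F x + acc) 0 l.

Lemma lsum_ext {A} (l : list A) F G : (forall x, F x = G x) -> lsum l F = lsum l G.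
Proof. intro H. induction l; simpl; auto. rewrite IHl, H; auto. Qed.

Lemma lsum_lin {A} (l : list A) F G H c d :
  lsum l (fun x => F x + c * G x + d * H x) = lsum l F + c * lsum l G + d * lsum l H.
Proof. induction l; simpl; [ring | rewrite IHl; ring]. Qed.

Lemma lsum_sub {A} (l : list A) F G : lsum l F - lsum l G = lsum l (fun x => F x - G x).
Proof. induction l; simpl; [ring | rewrite <- IHl; ring]. Qed.

Lemma lsum_le {A} (l : list A) F G : (forall x, In x l -> F x <= G x) -> lsum l F <= lsum l G.
Proof.
  induction l; simpl; intros H; [lra|].
  assert (F a <= G a) by auto. assert (lsum l F <= lsum l G) by auto. lra.
Qed.

Lemma lsum_nonneg {A} (l : list A) F : (forall x, 0 <= F x) -> 0 <= lsum l F.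
Proof. intro H. induction l; simpl; [lra|]. specialize (H a). lra. Qed.

Lemma lsum_in {A} (l : list A) F x : (forall x, 0 <= F x) -> In x l -> F x <= lsum l F.
Proof.
  intros H. induction l; simpl; [tauto|].
  pose proof (lsum_nonneg l F H). pose proof (H a).
  intros [->|Hi]; [lra|]. specialize (IHl Hi). lra.
Qed.

Section Closures.

Variable X : Banach.

Definition duals (A : (X -> R) -> Prop) := forall g, A g -> is_dual X g.

Lemma self_ncl (A : (X -> R) -> Prop) : duals A -> subset X A (ncl X A).
Proof.
  intros HA f Af. split; auto. intros eps He. exists f. split; auto.
  apply Rle_lt_trans with 0; auto. apply dnorm_le; [apply dual_dsub; auto | lra |].
  intro x. unfold dsub. rewrite Rminus_diag, Rabs_R0. pose proof (vnorm_nonneg X x). lra.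
Qed.

Lemma self_wcl (A : (X -> R) -> Prop) : duals A -> subset X A (wcl X A).
Proof.
  intros HA f Af. split; auto. intros l eps He. exists f. split; auto.
  apply Forall_forall. intros. rewrite Rminus_diag, Rabs_R0. lra.
Qed.

Lemma ncl_mono (A B : (X -> R) -> Prop) : subset X A B -> subset X (ncl X A) (ncl X B).
Proof.
  intros H f [Hf Hc]. split; auto. intros eps He.
  destruct (Hc eps He) as [g [Ag Hg]]. eauto.
Qed.

Lemma wcl_mono (A B : (X -> R) -> Prop) : subset X A B -> subset X (wcl X A) (wcl X B).
Proof.
  intros H f [Hf Hc]. split; auto. intros l eps He.
  destruct (Hc l eps He) as [g [Ag Hg]]. eauto.
Qed.

Lemma ncl_idem A : duals A -> subset X (ncl X (ncl X A)) (ncl X A).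
Proof.
  intros HA f [Hf Hc]. split; auto. intros eps He.
  destruct (Hc (eps/2)) as [g [[Hg Hg2] Dg]]; [lra|].
  destruct (Hg2 (eps/2)) as [h [Ah Dh]]; [lra|].
  exists h. split; auto. pose proof (dnorm_triang X f g h Hf Hg (HA h Ah)). lra.
Qed.

Lemma wcl_idem A : subset X (wcl X (wcl X A)) (wcl X A).
Proof.
  intros f [Hf Hc]. split; auto. intros l eps He.
  destruct (Hc l (eps/2)) as [g [[Hg Hg2] Dg]]; [lra|].
  destruct (Hg2 l (eps/2)) as [h [Ah Dh]]; [lra|].
  exists h. split; auto. rewrite Forall_forall in *. intros x Hx.
  specialize (Dg x Hx). specialize (Dh x Hx).
  replace (f x - h x) with ((f x - g x) + (g x - h x)) by ring.
  eapply Rle_lt_trans; [apply Rabs_triang | lra].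
Qed.

(** Norm convergence implies weak-star convergence: a norm-[eps'] approximation is
    within [eps] at each point of [l] once [eps' * (1 + sum of norms) <= eps]. *)
Lemma ncl_wcl A : duals A -> subset X (ncl X A) (wcl X A).
Proof.
  intros HA f [Hf Hc]. split; auto. intros l eps He.
  set (S := lsum l (vnorm X)).
  assert (S0 : 0 <= S) by (apply lsum_nonneg, vnorm_nonneg).
  destruct (Hc (eps / (1 + S))) as [g [Ag Hg]]; [apply Rdiv_lt_0_compat; lra|].
  exists g. split; auto. apply Forall_forall. intros x Hx.
  assert (D := dual_dsub X f g Hf (HA g Ag)).
  assert (B : Rabs (f x - g x) <= dnorm X (dsub X f g) * vnorm X x)
    by exact (dnorm_bound X _ x D).
  assert (Nx : vnorm X x <= S) by (apply lsum_in; auto; apply vnorm_nonneg).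
  pose proof (dnorm_nonneg X _ D). pose proof (vnorm_nonneg X x).
  assert (Pos : 0 < eps / (1 + S)) by (apply Rdiv_lt_0_compat; lra).
  assert (E : eps / (1 + S) + eps / (1 + S) * S = eps) by (field; lra).
  assert (dnorm X (dsub X f g) * vnorm X x <= eps / (1 + S) * S) by nra.
  lra.
Qed.

Lemma ncl_convex A : duals A -> convex X A -> convex X (ncl X A).
Proof.
  intros HA Hc f g t [Hf Nf] [Hg Ng] Ht. split; [now apply dual_lin|].
  intros eps He. destruct (Nf eps He) as [f' [Af Df]]. destruct (Ng eps He) as [g' [Ag Dg]].
  exists (fun x => t * f' x + (1 - t) * g' x). split; [now apply Hc|].
  assert (D1 := dual_dsub X f f' Hf (HA _ Af)). assert (D2 := dual_dsub X g g' Hg (HA _ Ag)).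
  pose proof (dnorm_nonneg X _ D1). pose proof (dnorm_nonneg X _ D2).
  apply Rle_lt_trans with (t * dnorm X (dsub X f f') + (1 - t) * dnorm X (dsub X g g')).
  - apply dnorm_le; [apply dual_dsub; apply dual_lin; auto | nra |]. intro x.
    pose proof (dnorm_bound X _ x D1). pose proof (dnorm_bound X _ x D2).
    pose proof (vnorm_nonneg X x). unfold dsub in *.
    replace (t * f x + (1 - t) * g x - (t * f' x + (1 - t) * g' x))
      with (t * (f x - f' x) + (1 - t) * (g x - g' x)) by ring.
    eapply Rle_trans; [apply Rabs_triang|].
    rewrite !Rabs_mult, (Rabs_right t), (Rabs_right (1 - t)) by lra. nra.
  - destruct (Rlt_or_le 0 t); nra.
Qed.

Lemma wcl_convex_of_combinations A :
  (forall f g t, A f -> A g -> 0 <= t <= 1 -> wcl X A (fun x => t * f x + (1 - t) * g x)) ->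
  convex X (wcl X A).
Proof.
  intros Hc f g t [Hf Nf] [Hg Ng] Ht. split; [now apply dual_lin|].
  intros l eps He.
  destruct (Nf l (eps/2)) as [f' [Af Df]]; [lra|].
  destruct (Ng l (eps/2)) as [g' [Ag Dg]]; [lra|].
  destruct (Hc f' g' t Af Ag Ht) as [_ Hw]. destruct (Hw l (eps/2)) as [h [Ah Dh]]; [lra|].
  exists h. split; auto. rewrite Forall_forall in *. intros x Hx.
  specialize (Df x Hx). specialize (Dg x Hx). specialize (Dh x Hx).
  replace (t * f x + (1 - t) * g x - h x)
    with (t * (f x - f' x) + (1 - t) * (g x - g' x) + (t * f' x + (1 - t) * g' x - h x)) by ring.
  eapply Rle_lt_trans; [apply Rabs_triang|].
  assert (Rabs (t * (f x - f' x) + (1 - t) * (g x - g' x)) <= eps / 2).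
  { eapply Rle_trans; [apply Rabs_triang|].
    rewrite !Rabs_mult, (Rabs_right t), (Rabs_right (1 - t)) by lra. nra. }
  lra.
Qed.

Lemma wcl_convex A : duals A -> convex X A -> convex X (wcl X A).
Proof.
  intros HA Hc. apply wcl_convex_of_combinations. intros f g t Af Ag Ht.
  apply self_wcl; [|now apply Hc].
  intros h Ah. apply HA in Ah. exact Ah.
Qed.

Lemma not_ncl_gap A f : is_dual X f -> ~ ncl X A f ->
  exists eps, eps > 0 /\ forall g, A g -> dnorm X (dsub X f g) >= eps.
Proof.
  intros Hf Hn. apply NNPP. intro H. apply Hn. split; [exact Hf|]. intros eps He.
  apply NNPP. intro H2. apply H. exists eps. split; [exact He|]. intros g Ag.
  apply Rnot_lt_ge. intro Hl. apply H2. eauto.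
Qed.

Lemma not_wcl_gap A f : is_dual X f -> ~ wcl X A f ->
  exists l eps, eps > 0 /\ forall g, A g -> ~ Forall (fun x => Rabs (f x - g x) < eps) l.
Proof.
  intros Hf Hn. apply NNPP. intro H. apply Hn. split; [exact Hf|]. intros l eps He.
  apply NNPP. intro H2. apply H. exists l, eps. split; [exact He|]. intros g Ag F.
  apply H2. eauto.
Qed.

End Closures.

Section ClosureSandwich.

Variable X : Banach.
Variable cl : ((X -> R) -> Prop) -> (X -> R) -> Prop.
Hypothesis cl_mono : forall A B, subset X A B -> subset X (cl A) (cl B).
Variables Rg K D : (X -> R) -> Prop.
Hypothesis Rg_K : subset X Rg K.
Hypothesis K_D : subset X K D.

Lemma sandwich_of_subset : subset X (cl (cl Rg)) (cl Rg) ->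
  subset X D (cl Rg) -> set_eq X (cl Rg) (cl K) /\ set_eq X (cl K) (cl D).
Proof.
  intros cl_idem HD.
  assert (RK := cl_mono _ _ Rg_K). assert (KD := cl_mono _ _ K_D).
  assert (DR : subset X (cl D) (cl Rg)) by (intros f Hf; apply cl_idem, (cl_mono _ _ HD), Hf).
  split; intro f; split; auto.
Qed.

Lemma subset_of_sandwich : subset X D (cl D) ->
  set_eq X (cl Rg) (cl K) /\ set_eq X (cl K) (cl D) -> subset X D (cl Rg).
Proof. intros D_cl [E1 E2] f Hf. apply E1, E2, D_cl, Hf. Qed.

End ClosureSandwich.

Lemma convex_set_eq (X : Banach) A B : set_eq X A B -> convex X B -> convex X A.
Proof. intros E HB f g t Hf Hg Ht. apply E, HB; [apply E, Hf | apply E, Hg | exact Ht]. Qed.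

(** The convex hull of any set of functionals is convex: concatenate the two
    families of weights, scaled by [t] and [1 - t]. *)
Lemma co_convex (X : Banach) (A : (X -> R) -> Prop) : convex X (co X A).
Proof.
  intros f g t [n1 [l1 [a1 [A1 [B1 C1]]]]] [n2 [l2 [a2 [A2 [B2 C2]]]]] Ht.
  exists (n1 + n2)%nat,
    (fun i => if (i <? n1)%nat then t * l1 i else (1 - t) * l2 (i - n1)%nat),
    (fun i => if (i <? n1)%nat then a1 i else a2 (i - n1)%nat).
  assert (Hlow : forall (u : nat -> R) v, rsum n1 (fun i => if (i <? n1)%nat then u i else v i) = rsum n1 u)
    by (intros; apply rsum_ext; intros i Hi; destruct (Nat.ltb_spec i n1); [reflexivity | lia]).
  assert (Hhigh : forall (u : nat -> R) v,
    rsum n2 (fun i => if (n1 + i <? n1)%nat then u (n1 + i)%nat else v (n1 + i - n1)%nat) = rsum n2 v).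
  { intros. apply rsum_ext. intros i Hi. destruct (Nat.ltb_spec (n1 + i) n1); [lia|].
    f_equal. lia. }
  split; [|split].
  - intros i Hi. destruct (Nat.ltb_spec i n1).
    + destruct (A1 i H); split; auto. nra.
    + destruct (A2 (i - n1)%nat) as [L Ai]; [lia|]. split; auto. nra.
  - rewrite rsum_app, Hlow.
    rewrite (Hhigh (fun i => t * l1 i) (fun i => (1 - t) * l2 i)).
    rewrite !rsum_scal, B1, B2. ring.
  - intro x. rewrite C1, C2, rsum_app. symmetry.
    rewrite (rsum_ext n1 _ (fun i => t * (l1 i * a1 i x)))
      by (intros i Hi; destruct (Nat.ltb_spec i n1); [ring | lia]).
    rewrite (rsum_ext n2 _ (fun i => (1 - t) * (l2 i * a2 i x))).
    + rewrite !rsum_scal. ring.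
    + intros i Hi. destruct (Nat.ltb_spec (n1 + i) n1); [lia|].
      replace (n1 + i - n1)%nat with i by lia. ring.
Qed.

Section Fitzpatrick.

Variable X : Banach.
Variable T : X -> (X -> R) -> Prop.
Hypothesis hT : operator X T.
Variable C : R.
Hypothesis hC : forall g, range X T g -> dnorm X g <= C.

Lemma range_duals : duals X (range X T).
Proof. intros g [x Hx]. exact (hT x g Hx). Qed.

Lemma range_bound g x : range X T g -> Rabs (g x) <= Rabs C * vnorm X x.
Proof.
  intro Rg. pose proof (dnorm_bound X g x (range_duals g Rg)).
  pose proof (hC g Rg). pose proof (RRle_abs C). pose proof (vnorm_nonneg X x).
  assert (dnorm X g * vnorm X x <= Rabs C * vnorm X x) by (apply Rmult_le_compat_r; lra).
  lra.
Qed.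

Lemma co_duals : duals X (co X (range X T)).
Proof.
  intros f [n [lam [a [H1 [H2 H3]]]]]. split; [|split].
  - intros x y. rewrite !H3, <- rsum_add. apply rsum_ext. intros i Hi.
    destruct (H1 i Hi) as [_ Ai]. rewrite dual_add by exact (range_duals _ Ai). ring.
  - intros c x. rewrite !H3, <- rsum_scal. apply rsum_ext. intros i Hi.
    destruct (H1 i Hi) as [_ Ai]. rewrite dual_scal by exact (range_duals _ Ai). ring.
  - exists (Rabs C). intro x. rewrite H3.
    apply Rle_trans with (rsum n (fun i => (Rabs C * vnorm X x) * lam i)).
    + apply rsum_abs. intros i Hi. destruct (H1 i Hi) as [L Ai].
      rewrite Rabs_mult, Rabs_right by lra. pose proof (range_bound (a i) x Ai). nra.
    + rewrite rsum_scal, H2. lra.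
Qed.

Lemma range_co : subset X (range X T) (co X (range X T)).
Proof.
  intros g Rg. exists 1%nat, (fun _ => 1), (fun _ => g). split; [|split].
  - intros i _. split; [lra | exact Rg].
  - simpl; ring.
  - intro x; simpl; ring.
Qed.

Lemma dom_duals : duals X (pi2_dom_fitz X T).
Proof. intros f [x [H _]]. exact H. Qed.

(** [f] has bounded pairing with [G(T)]: [<f - g, z>] is bounded above on the graph,
    i.e. the Fitzpatrick function is finite at [(0, f)]. *)
Definition pairing_bounded (f : X -> R) : Prop :=
  exists N, forall z g, T z g -> f z - g z <= N.

(** Since [R_T] is bounded, [f ∈ π₂ dom φ_T] iff the pairing of [f] is bounded:
    moving the base point from [0] to [x] only shifts the bound by [<g, x>]. *)
Lemma pi2_dom_fitz_iff f : pi2_dom_fitz X T f <-> is_dual X f /\ pairing_bounded f.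
Proof.
  split.
  - intros [x [Hf [M HM]]]. split; [exact Hf|]. exists (M + Rabs C * vnorm X x).
    intros z g Hz. specialize (HM z g Hz).
    assert (Rg : range X T g) by (exists z; exact Hz).
    rewrite !dual_sub in HM by (exact Hf || exact (range_duals g Rg)).
    pose proof (range_bound g x Rg). pose proof (Rabs_Ropp (g x)). pose proof (RRle_abs (- g x)).
    lra.
  - intros [Hf [N HN]]. exists (vzero X). split; [exact Hf|]. exists N.
    intros z g Hz. assert (Dg := range_duals g (ex_intro _ z Hz)).
    rewrite !dual_sub, !dual_0 by assumption. specialize (HN z g Hz). lra.
Qed.

Section Monotone.

Hypothesis hmon : monotone X T.

(** For [a ∈ T x], monotonicity gives [<a - g, z> <= <a - g, x>], which is bounded. *)
Lemma range_pairing_bounded a : range X T a -> pairing_bounded a.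
Proof.
  intros [x Hx]. exists (a x + Rabs C * vnorm X x). intros z g Hz.
  specialize (hmon x a z g Hx Hz).
  rewrite !dual_sub in hmon by (exact (hT x a Hx) || exact (hT z g Hz)).
  pose proof (range_bound g x (ex_intro _ z Hz)). pose proof (Rabs_Ropp (g x)).
  pose proof (RRle_abs (- g x)). lra.
Qed.

Lemma combination_pairing_bounded n (lam : nat -> R) (a : nat -> X -> R) :
  (forall i, (i < n)%nat -> 0 <= lam i /\ range X T (a i)) ->
  exists N, forall z g, T z g -> rsum n (fun i => lam i * (a i z - g z)) <= N.
Proof.
  induction n as [|n IH]; intros Ha.
  - exists 0. intros. simpl. lra.
  - destruct IH as [N HN]; [intros i Hi; apply Ha; lia|].
    destruct (Ha n (Nat.lt_succ_diag_r n)) as [Hl Rn].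
    destruct (range_pairing_bounded (a n) Rn) as [Nn HNn].
    exists (N + lam n * Nn). intros z g Hz. simpl.
    specialize (HN z g Hz). specialize (HNn z g Hz). nra.
Qed.

Lemma co_dom : subset X (co X (range X T)) (pi2_dom_fitz X T).
Proof.
  intros f Hco. apply pi2_dom_fitz_iff. split; [exact (co_duals f Hco)|].
  destruct Hco as [n [lam [a [H1 [H2 H3]]]]].
  destruct (combination_pairing_bounded n lam a H1) as [N HN].
  exists N. intros z g Hz. rewrite H3.
  replace (rsum n (fun i => lam i * a i z) - g z)
    with (rsum n (fun i => lam i * (a i z - g z))); [exact (HN z g Hz)|].
  rewrite (rsum_ext n _ (fun i => lam i * a i z + (- g z) * lam i)) by (intros; ring).
  rewrite rsum_add, rsum_scal, H2. ring.
Qed.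

End Monotone.

Lemma ratio_big f g M z : is_dual X f -> range X T g ->
  f z - g z > Rabs M * (dnorm X f + Rabs C + 1) ->
  (f z - g z) / dnorm X (dsub X f g) > M.
Proof.
  intros Hf Rg H. assert (Hg := range_duals g Rg).
  assert (Dd := dual_dsub X f g Hf Hg).
  pose proof (dnorm_nonneg X f Hf). pose proof (dnorm_nonneg X _ Dd).
  pose proof (dnorm_sub_le X f g Hf Hg). pose proof (hC g Rg).
  pose proof (Rabs_pos M). pose proof (RRle_abs C). pose proof (RRle_abs M).
  set (dn := dnorm X (dsub X f g)) in *.
  destruct (Req_dec dn 0) as [E|E].
  - assert (Z : dsub X f g z = 0) by exact (dnorm_zero X _ z Dd E).
    unfold dsub in Z. nra.
  - apply Rmult_lt_reg_r with dn; [lra|]. unfold Rdiv.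
    rewrite Rmult_assoc, Rinv_l by lra. nra.
Qed.

Lemma pairing_bounded_of_ratio f : is_dual X f -> ~ sup_ratio_infinite X T f ->
  pairing_bounded f.
Proof.
  intros Hf Hs. apply not_all_ex_not in Hs. destruct Hs as [M HM].
  exists (Rabs M * (dnorm X f + Rabs C + 1)). intros z g Hz.
  apply Rnot_gt_le. intro Hgt. apply HM. exists z, g. split; [exact Hz|].
  exact (ratio_big f g M z Hf (ex_intro _ z Hz) Hgt).
Qed.

Lemma ratio_bounded_of_gap f eps : pairing_bounded f -> eps > 0 ->
  (forall g, range X T g -> dnorm X (dsub X f g) >= eps) -> ~ sup_ratio_infinite X T f.
Proof.
  intros [N HN] He Hgap Hs. destruct (Hs (Rabs N / eps)) as [z [g [Hz Hr]]].
  specialize (HN z g Hz). specialize (Hgap g (ex_intro _ z Hz)).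
  pose proof (RRle_abs N). pose proof (Rabs_pos N).
  set (dn := dnorm X (dsub X f g)) in *.
  assert (Hq : (f z - g z) / dn <= Rabs N / eps).
  { apply Rle_trans with (Rabs N / dn).
    - unfold Rdiv. apply Rmult_le_compat_r; [apply Rlt_le, Rinv_0_lt_compat |]; lra.
    - unfold Rdiv. apply Rmult_le_compat_l; [lra|]. apply Rinv_le_contravar; lra. }
  lra.
Qed.

Lemma sup_infinite_outside (S : (X -> R) -> Prop) : subset X (pi2_dom_fitz X T) S ->
  forall f, is_dual X f -> ~ S f -> sup_ratio_infinite X T f.
Proof.
  intros HS f Hf Hn. apply NNPP. intro Hs. apply Hn, HS, pi2_dom_fitz_iff.
  split; [exact Hf | exact (pairing_bounded_of_ratio f Hf Hs)].
Qed.

End Fitzpatrick.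

Lemma infimum_exists {U : Type} (P : U -> Prop) (F : U -> R) :
  (exists u, P u) -> (forall u, P u -> 0 <= F u) ->
  exists d, (forall u, P u -> d <= F u) /\
            (forall eta, eta > 0 -> exists u, P u /\ F u <= d + eta).
Proof.
  intros [u0 Pu0] Hpos.
  destruct (completeness (fun r => exists u, P u /\ r = - F u)) as [m [Hub Hleast]].
  - exists 0. intros r [u [Pu ->]]. specialize (Hpos u Pu). lra.
  - exists (- F u0), u0. auto.
  - exists (- m). split.
    + intros u Pu. assert (- F u <= m) by (apply Hub; eauto). lra.
    + intros eta Heta. apply NNPP. intro Hno.
      assert (m <= m - eta); [|lra]. apply Hleast. intros r [u [Pu ->]].
      destruct (Rle_dec (F u) (- m + eta)) as [h|h]; [exfalso; eauto | lra].
Qed.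

(** The descent step behind the projection onto a convex set: if [g0] is a
    near-minimiser of a quadratic [D] (within [s d / 2] of its infimum [d]) and
    moving a step [s] towards [h] gives [D0 - 2 s P + s^2 Q >= d], then [P] is at
    most [d / 2], so [D0 - P >= d / 2]. *)
Lemma quadratic_descent D0 P Q d s B : 0 < s -> 0 <= Q <= B ->
  s * (B + 1) <= d / 2 -> d <= D0 -> D0 <= d + s * d / 2 ->
  d <= D0 - 2 * s * P + s * s * Q -> d / 2 <= D0 - P.
Proof.
  intros Hs HQ HsB Hd HD0 Hstep.
  assert (Hsq : s * s * Q <= s * s * B) by (apply Rmult_le_compat_l; nra).
  assert (Hm : s * (2 * P) <= s * (d / 2 + s * B)) by nra.
  apply Rmult_le_reg_l in Hm; [|lra].
  assert (s * B <= s * (B + 1)) by nra. lra.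
Qed.

Lemma sq_lt (a e : R) : 0 < e -> a * a < e * e -> Rabs a < e.
Proof.
  intros He H. destruct (Rlt_or_le (Rabs a) e) as [|Hle]; auto.
  assert (Rabs a * Rabs a = a * a) by (rewrite <- Rabs_mult; apply Rabs_right; nra).
  nra.
Qed.

(** Weak-star separation from a bounded set whose weak-star closure is convex:
    only finitely many points [l] of [X] matter, and on them the problem is the
    Euclidean projection of [f] onto a convex set.  The separating vector is
    [w = Σ_{x ∈ l} (f x - g0 x) x] for a near-nearest point [g0]. *)
Section Separation.

Variable X : Banach.
Variable A : (X -> R) -> Prop.
Hypothesis A_duals : duals X A.
Variable C : R.
Hypothesis A_bound : forall g, A g -> dnorm X g <= C.

Definition sqdist (l : list X) (f g : X -> R) : R :=
  lsum l (fun x => (f x - g x) * (f x - g x)).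

Definition wsum (l : list X) (a : X -> R) : X :=
  fold_right (fun x acc => vadd X (vscal X (a x) x) acc) (vzero X) l.

Lemma dual_wsum k l a : is_dual X k -> k (wsum l a) = lsum l (fun x => a x * k x).
Proof.
  intro D. induction l; simpl; [now apply dual_0|].
  rewrite dual_add, dual_scal, IHl by exact D. reflexivity.
Qed.

(** A point of [wcl A] is within [1] at [x] of a point of [A], so [h - g0] is bounded there. *)
Lemma wcl_diff_bound h g0 x : A h -> wcl X A g0 ->
  Rabs (h x - g0 x) <= 2 * Rabs C * vnorm X x + 1.
Proof.
  intros Ah [_ W0]. destruct (W0 (x :: nil) 1) as [h' [Ah' F']]; [lra|].
  inversion F' as [|? ? F1 _]; subst.
  assert (Hb : forall k, A k -> Rabs (k x) <= Rabs C * vnorm X x).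
  { intros k Ak. pose proof (dnorm_bound X k x (A_duals k Ak)). pose proof (A_bound k Ak).
    pose proof (RRle_abs C). pose proof (vnorm_nonneg X x).
    assert (dnorm X k * vnorm X x <= Rabs C * vnorm X x) by (apply Rmult_le_compat_r; lra).
    lra. }
  pose proof (Hb h Ah). pose proof (Hb h' Ah').
  replace (h x - g0 x) with (h x - h' x + (h' x - g0 x)) by ring.
  rewrite Rabs_minus_sym in F1.
  assert (Rabs (h x - h' x) <= Rabs (h x) + Rabs (h' x))
    by (unfold Rminus; rewrite <- (Rabs_Ropp (h' x)); apply Rabs_triang).
  eapply Rle_trans; [apply Rabs_triang | lra].
Qed.

Lemma sqdist_gap f l eps : eps > 0 ->
  (forall g, A g -> ~ Forall (fun x => Rabs (f x - g x) < eps) l) ->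
  forall g, wcl X A g -> sqdist l f g >= eps / 2 * (eps / 2).
Proof.
  intros He Heps g [Hg Wg]. apply Rnot_lt_ge. intro Hl.
  destruct (Wg l (eps / 2)) as [h [Ah Fh]]; [lra|].
  apply (Heps h Ah). rewrite Forall_forall in *. intros x Hx. specialize (Fh x Hx).
  assert (Rabs (f x - g x) < eps / 2).
  { apply sq_lt; [lra|]. eapply Rle_lt_trans; [|exact Hl].
    apply (lsum_in l (fun x => (f x - g x) * (f x - g x))); auto. intro; apply Rle_0_sqr. }
  replace (f x - h x) with ((f x - g x) + (g x - h x)) by ring.
  eapply Rle_lt_trans; [apply Rabs_triang | lra].
Qed.

(** Bound on [Σ_{x ∈ l} (h x - g x)^2] for [h ∈ A] and [g ∈ wcl A]. *)
Definition sqbound (l : list X) : R :=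
  lsum l (fun x => (2 * Rabs C * vnorm X x + 1) * (2 * Rabs C * vnorm X x + 1)).

(** If [g0 ∈ wcl A] is within [s d / 2] of the infimum [d] of [sqdist l f] over the
    convex set [wcl A], with a small enough step [s], then [w = Σ (f x - g0 x) x]
    separates [f] from [A] with margin [d / 2]: compare [g0] with [g0 + s (h - g0)]. *)
Lemma near_projection_separates f l d s g0 h :
  convex X (wcl X A) -> (forall g, wcl X A g -> d <= sqdist l f g) ->
  wcl X A g0 -> sqdist l f g0 <= d + s * d / 2 ->
  0 < s <= 1 -> s * (sqbound l + 1) <= d / 2 -> A h -> is_dual X f ->
  f (wsum l (fun x => f x - g0 x)) - h (wsum l (fun x => f x - g0 x)) >= d / 2.
Proof.
  intros Hcv Dge Wg0 Hg0 Hs HsB Ah Hf. assert (Dh := A_duals h Ah).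
  set (P := lsum l (fun x => (f x - g0 x) * (h x - g0 x))).
  set (Q := lsum l (fun x => (h x - g0 x) * (h x - g0 x))).
  assert (Ew : f (wsum l (fun x => f x - g0 x)) - h (wsum l (fun x => f x - g0 x))
             = sqdist l f g0 - P).
  { rewrite !dual_wsum by assumption. unfold sqdist, P. rewrite !lsum_sub.
    apply lsum_ext. intro; ring. }
  assert (Estep : sqdist l f (fun x => s * h x + (1 - s) * g0 x)
                = sqdist l f g0 + (-2 * s) * P + (s * s) * Q).
  { unfold sqdist, P, Q. rewrite <- lsum_lin. apply lsum_ext. intro; ring. }
  assert (Wgs : wcl X A (fun x => s * h x + (1 - s) * g0 x))
    by (apply Hcv; [apply self_wcl | | lra]; auto).
  assert (HQ : 0 <= Q <= sqbound l).
  { split; [apply lsum_nonneg; intro; apply Rle_0_sqr|]. apply lsum_le. intros x Hx.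
    assert (Hb : 0 <= 2 * Rabs C * vnorm X x + 1)
      by (pose proof (Rabs_pos C); pose proof (vnorm_nonneg X x); nra).
    apply Rsqr_le_abs_1. rewrite (Rabs_right (2 * Rabs C * vnorm X x + 1)) by lra.
    now apply wcl_diff_bound. }
  pose proof (Dge _ Wgs). pose proof (Dge g0 Wg0).
  pose proof (quadratic_descent (sqdist l f g0) P Q d s (sqbound l) ltac:(lra) HQ HsB).
  lra.
Qed.

Lemma weak_star_separation f : is_dual X f -> ~ wcl X A f -> convex X (wcl X A) ->
  exists w del, del > 0 /\ forall h, A h -> f w - h w >= del.
Proof.
  intros Hf Hn Hcv.
  destruct (classic (exists g, A g)) as [[g1 Ag1]|Hempty];
    [| exists (vzero X), 1; split; [lra | intros h Ah; exfalso; eauto]].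
  destruct (not_wcl_gap X A f Hf Hn) as [l [eps [He Heps]]].
  assert (LB := sqdist_gap f l eps He Heps).
  destruct (infimum_exists (wcl X A) (sqdist l f)) as [d [Dge Near]].
  { exists g1. apply self_wcl; auto. }
  { intros g _. apply lsum_nonneg. intro. apply Rle_0_sqr. }
  assert (Hd : d > 0).
  { assert (Hq : eps / 2 * (eps / 2) > 0) by nra.
    destruct (Near (eps / 2 * (eps / 2) / 2)) as [g' [Wg' Hg']]; [lra|].
    specialize (LB g' Wg'). lra. }
  set (B := sqbound l).
  assert (HB : 0 <= B) by (apply lsum_nonneg; intro x; apply Rle_0_sqr).
  set (s := Rmin 1 (d / (2 * (B + 1)))).
  assert (Hs : 0 < s <= 1)
    by (split; [apply Rmin_glb_lt; [lra | apply Rdiv_lt_0_compat; lra] | apply Rmin_l]).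
  assert (HsB : s * (B + 1) <= d / 2).
  { assert (s <= d / (2 * (B + 1))) by apply Rmin_r.
    assert (E : d / (2 * (B + 1)) * (B + 1) = d / 2) by (field; lra).
    apply Rmult_le_compat_r with (r := B + 1) in H; lra. }
  destruct (Near (s * d / 2)) as [g0 [Wg0 Hg0]]; [nra|].
  exists (wsum l (fun x => f x - g0 x)), (d / 2). split; [lra|].
  intros h Ah. exact (near_projection_separates f l d s g0 h Hcv Dge Wg0 Hg0 Hs HsB Ah Hf).
Qed.

End Separation.

Section Conditions.

Variable X : Banach.
Variable T : X -> (X -> R) -> Prop.
Hypothesis hT : operator X T.
Hypothesis hmon : monotone X T.
Variable C : R.
Hypothesis hC : forall g, range X T g -> dnorm X g <= C.

Let Rduals := range_duals X T hT.
Let Cduals := co_duals X T hT C hC.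
Let Rco := range_co X T.
Let Cdom := co_dom X T hT C hC hmon.

(** (i) ⟹ (ii): a point of [π₂ dom φ_T] outside the norm closure of [R_T] has
    bounded pairing and a positive distance to [R_T], hence a bounded ratio. *)
Lemma cond_i_ii : cond_i X T -> cond_ii X T.
Proof.
  intros Hi f Hd. apply NNPP. intro Hn.
  apply (pi2_dom_fitz_iff X T hT C hC) in Hd. destruct Hd as [Hf Hb].
  destruct (not_ncl_gap X _ f Hf Hn) as [eps [He Hgap]].
  exact (ratio_bounded_of_gap X T f eps Hb He Hgap (Hi f Hf Hn)).
Qed.

Lemma cond_ii_i : cond_ii X T -> cond_i X T.
Proof. exact (sup_infinite_outside X T hT C hC (ncl X (range X T))). Qed.

Lemma cond_ii_iii : cond_ii X T -> cond_iii X T.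
Proof. exact (sandwich_of_subset X (ncl X) (ncl_mono X) _ _ _ Rco Cdom (ncl_idem X _ Rduals)). Qed.

Lemma cond_iii_ii : cond_iii X T -> cond_ii X T.
Proof.
  exact (subset_of_sandwich X (ncl X) _ _ _ (self_ncl X _ (dom_duals X T))).
Qed.

Lemma cond_iii_iv : cond_iii X T -> cond_iv X T.
Proof.
  intros [E _]. apply (convex_set_eq X _ _ E). exact (ncl_convex X _ Cduals (co_convex X _)).
Qed.

Lemma cond_iv_iv' : cond_iv X T -> cond_iv' X T.
Proof.
  intro Hiv. apply wcl_convex_of_combinations. intros f g t Hf Hg Ht.
  apply ncl_wcl; [exact Rduals|]. apply Hiv; [apply self_ncl; auto .. | exact Ht].
Qed.

Lemma cond_i_i' : cond_i X T -> cond_i' X T.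
Proof. intros Hi f Hf Hn. apply Hi; [exact Hf|]. intro H. apply Hn, ncl_wcl; auto. Qed.

Lemma cond_ii_ii' : cond_ii X T -> cond_ii' X T.
Proof. intros Hii f Hf. apply ncl_wcl, Hii; auto. Qed.

Lemma cond_ii'_iii' : cond_ii' X T -> cond_iii' X T.
Proof. exact (sandwich_of_subset X (wcl X) (wcl_mono X) _ _ _ Rco Cdom (wcl_idem X _)). Qed.

Lemma cond_iii'_i' : cond_iii' X T -> cond_i' X T.
Proof.
  intro H. exact (sup_infinite_outside X T hT C hC (wcl X (range X T))
    (subset_of_sandwich X (wcl X) _ _ _ (self_wcl X _ (dom_duals X T)) H)).
Qed.

Lemma cond_iii'_iv' : cond_iii' X T -> cond_iv' X T.
Proof.
  intros [E _]. apply (convex_set_eq X _ _ E). exact (wcl_convex X _ Cduals (co_convex X _)).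
Qed.

Lemma maximal_monotone_absorbs x f : maximal_monotone X T -> is_dual X f ->
  (forall z g, T z g -> 0 <= f (vsub X x z) - g (vsub X x z)) -> T x f.
Proof.
  intros [_ hmax] Hf Hrel.
  apply (hmax (fun y k => T y k \/ (y = x /\ k = f))); [| | now left | now right].
  - intros y k [H|[_ ->]]; [exact (hT y k H) | exact Hf].
  - intros y k y' k' [H1|[-> ->]] [H2|[-> ->]].
    + exact (hmon y k y' k' H1 H2).
    + specialize (Hrel y k H1). pose proof (hT y k H1).
      rewrite !dual_sub in * by assumption. lra.
    + exact (Hrel y' k' H2).
    + unfold vsub. rewrite vadd_opp, !dual_0 by exact Hf. lra.
Qed.

(** (iv') ⟹ (i') for maximal monotone [T]: if the ratio were bounded at [f ∉ wcl R_T],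
    the pairing of [f] would be bounded by some [N]; separating [f] from [R_T] by [w]
    with margin [del], the pair [(t w, f)] with [t = |N| / del] is monotonically
    related to [G(T)], so by maximality [f ∈ R_T], a contradiction. *)
Lemma cond_iv'_i' : maximal_monotone X T -> cond_iv' X T -> cond_i' X T.
Proof.
  intros Hmax Hiv f Hf Hn. apply NNPP. intro Hs.
  destruct (pairing_bounded_of_ratio X T hT C hC f Hf Hs) as [N HN].
  destruct (weak_star_separation X _ Rduals C hC f Hf Hn Hiv) as [w [del [Hdel Hw]]].
  set (t := Rabs N / del).
  assert (Ht : t * del = Rabs N) by (unfold t; field; lra).
  assert (Ht0 : 0 <= t) by (unfold t; apply Rmult_le_pos; [apply Rabs_pos | apply Rlt_le, Rinv_0_lt_compat; lra]).
  apply Hn, (self_wcl X _ Rduals). exists (vscal X t w).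
  apply maximal_monotone_absorbs; [exact Hmax | exact Hf |]. intros z g Hz.
  assert (Rg : range X T g) by (exists z; exact Hz).
  rewrite !dual_sub, !dual_scal by (exact Hf || exact (Rduals g Rg)).
  specialize (Hw g Rg). specialize (HN z g Hz). pose proof (RRle_abs N).
  assert (t * (f w - g w) >= t * del) by (apply Rle_ge, Rmult_le_compat_l; lra).
  lra.
Qed.

End Conditions.

Theorem theorem1p6 (X : Banach) (T : X -> (X -> R) -> Prop)
  (hT : operator X T) (hmon : monotone X T) (hbd : bounded_set X (range X T)) :
  ((cond_i X T <-> cond_ii X T) /\ (cond_ii X T <-> cond_iii X T)) /\
  (cond_iii X T -> cond_iv X T) /\ (cond_iv X T -> cond_iv' X T) /\
  (cond_i X T -> cond_i' X T) /\
  (cond_ii X T -> cond_ii' X T) /\ (cond_ii' X T -> cond_iii' X T) /\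
  (cond_iii' X T -> cond_i' X T) /\
  (cond_iii' X T -> cond_iv' X T) /\
  (maximal_monotone X T -> cond_iv' X T -> cond_i' X T).
Proof.
  destruct hbd as [C hC].
  repeat match goal with |- _ /\ _ => split end.
  - split; [exact (cond_i_ii X T hT C hC) | exact (cond_ii_i X T hT C hC)].
  - split; [exact (cond_ii_iii X T hT hmon C hC) | exact (cond_iii_ii X T)].
  - exact (cond_iii_iv X T hT C hC).
  - exact (cond_iv_iv' X T hT).
  - exact (cond_i_i' X T hT).
  - exact (cond_ii_ii' X T hT).
  - exact (cond_ii'_iii' X T hT hmon C hC).
  - exact (cond_iii'_i' X T hT C hC).
  - exact (cond_iii'_iv' X T hT C hC).
  - exact (cond_iv'_i' X T hT hmon C hC).
Qed.
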